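(* Let $\pi$ be a $k$-permutation and $\alpha,\beta\in(0,1)$. Then $$\lim_{n\to\infty} n^3\,\frac{\partial}{\partial x_{\lfloor\alpha n\rfloor,\lfloor\beta n\rfloor}}h_{\pi,n}(0,\dots,0)=\lim_{n\to\infty}\frac{k!}{n^{2k-4}}\sum_{\substack{f,g:[k]\to[n]\\ \text{strictly increasing}}}\ \sum_{m\in[k]}B^{\lfloor\alpha n\rfloor,\lfloor\beta n\rfloor}_{f(m),\,g(\pi(m))}$$ whenever either of the two limits exists (in which case both exist).
   Context: A $k$-permutation is a bijection of $[k]=\{1,\dots,k\}$. Fix $n\ge2$. For $k',l\in[n-1]$ let $B^{k',l}\in\mathbb{R}^{n\times n}$ have entries $+1$ at $(k',l)$ and $(k'+1,l+1)$, $-1$ at $(k'+1,l)$ and $(k',l+1)$, and $0$ elsewhere. Let $J$ be the $n\times n$ matrix with all entries $1/n$, and for $x=(x_{i,j})_{i,j\in[n-1]}$ let $J^x=J+\sum_{i,j\in[n-1]}x_{i,j}B^{i,j}$. For a $k$-permutation $\pi$, $h_{\pi,n}(x)$ is the density of $\pi$ in the step permuton of $J^x$, which is the polynomial $h_{\pi,n}(x)=\frac{k!}{n^k}\sum_{f,g}\frac{1}{\prod_{i\in[n]}|f^{-1}(i)|!\,|g^{-1}(i)|!}\prod_{m\in[k]}(J^x)_{f(m),g(\pi(m))}$, the sum over all non-decreasing functions $f,g:[k]\to[n]$. The sequences in $n$ are considered for $n$ large enough that $\lfloor\alpha n\rfloor,\lfloor\beta n\rfloor\in[n-1]$. *)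

From HB Require Import structures.
From mathcomp Require Import all_boot all_order all_algebra.
From mathcomp Require Import all_classical all_reals all_analysis.
From mathcomp Require Import fingroup perm.
Set Implicit Arguments. Unset Strict Implicit. Unset Printing Implicit Defensive.
Import Order.TTheory GRing.Theory Num.Theory.
Local Open Scope ring_scope.

(* Indices: rows/columns of n x n matrices are 'I_n (0-based); the paper's
   1-based index i corresponds to ordinal with value i-1.  Matrix B and the
   variables x are indexed by 1-based natural numbers, as in the paper. *)

Definition Bmx (R : pzRingType) (n k' l : nat) : 'M[R]_n :=
  \matrix_(i < n, j < n)
    (if ((i.+1 == k') && (j.+1 == l)) || ((i.+1 == k'.+1) && (j.+1 == l.+1))
     then 1
     else if ((i.+1 == k'.+1) && (j.+1 == l)) || ((i.+1 == k') && (j.+1 == l.+1))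
     then -1 else 0).

Definition Jmx (R : fieldType) (n : nat) : 'M[R]_n := const_mx (n%:R)^-1.

Definition Jx (R : fieldType) (n : nat) (x : nat -> nat -> R) : 'M[R]_n :=
  Jmx R n + \sum_(1 <= i < n) \sum_(1 <= j < n) x i j *: Bmx R n i j.

Definition fT (k n : nat) := {ffun 'I_k -> 'I_n}.

Definition nondecr (k n : nat) (f : {ffun 'I_k -> 'I_n}) : bool :=
  [forall i : 'I_k, forall j : 'I_k, (i <= j)%N ==> (f i <= f j)%N].

Definition strincr (k n : nat) (f : {ffun 'I_k -> 'I_n}) : bool :=
  [forall i : 'I_k, forall j : 'I_k, (i < j)%N ==> (f i < f j)%N].

Definition fib (k n : nat) (f : {ffun 'I_k -> 'I_n}) (i : 'I_n) : nat :=
  #|[set m : 'I_k | f m == i]|.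

(* h_{pi,n}(x): density of pi in the step permuton of J^x *)
Definition h (R : fieldType) (k : nat) (pi : 'S_k) (n : nat)
    (x : nat -> nat -> R) : R :=
  (k`!)%:R / (n%:R) ^+ k *
  \sum_(f : fT k n | nondecr f)
   \sum_(g : fT k n | nondecr g)
     ((\prod_(i < n) ((fib f i)`! * (fib g i)`!)%N)%:R)^-1 *
     \prod_(m < k) Jx n x (f m) (g (pi m)).

Definition ecoord (R : pzRingType) (a b : nat) (t : R) : nat -> nat -> R :=
  fun i j => if (i == a) && (j == b) then t else 0.

Definition dh (R : realType) (k : nat) (pi : 'S_k) (n a b : nat) : R :=
  derive1 (fun t : R => h pi n (ecoord a b t)) 0.

Definition fl (R : realType) (alpha : R) (n : nat) : nat := Num.truncn (alpha * n%:R).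

Definition lhs_seq (R : realType) (k : nat) (pi : 'S_k) (alpha beta : R)
    (n : nat) : R :=
  (n%:R) ^+ 3 * @dh R k pi n (fl alpha n) (fl beta n).

Definition rhs_seq (R : realType) (k : nat) (pi : 'S_k) (alpha beta : R)
    (n : nat) : R :=
  (k`!)%:R / (n%:R : R) ^ (2 * (k : int) - 4) *
  \sum_(f : fT k n | strincr f)
   \sum_(g : fT k n | strincr g)
    \sum_(m < k) Bmx R n (fl alpha n) (fl beta n) (f m) (g (pi m)).

From HB Require Import structures.
From mathcomp Require Import all_boot all_order all_algebra.
From mathcomp Require Import all_classical all_reals all_analysis.
From mathcomp Require Import fingroup perm.
From mathcomp Require Import zify ring lra.
Import Order.TTheory GRing.Theory Num.Theory.
Import numFieldNormedType.Exports.
Set Implicit Arguments. Unset Strict Implicit. Unset Printing Implicit Defensive.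

(* Differentiating h_{pi,n} along x_{a,b} at 0 and factoring B^{a,b} as the
   outer product of e_a - e_{a+1} and e_b - e_{b+1} turns both sequences into
   k!/n^(2k-4) * sum_m D(a,m) D(b,pi m), where D(a,m) sums the weights
   1/prod_i |f^-1(i)|! of the maps f : [k] -> [n] with f(m) = a minus those
   with f(m) = a+1; f ranges over the non-decreasing maps on the left and over
   the strictly increasing maps (all of weight 1) on the right.  Moving the
   value a of f to a+1, when a+1 is not a value of f, preserves monotonicity
   and weight, so only maps taking both values a and a+1 contribute to D.  There
   are O(n^(k-2)) such maps, and only O(n^(k-3)) of them are non-decreasing
   without being strictly increasing, so both D's are O(n^(k-2)) and differ by
   O(n^(k-3)): the two sequences differ by O(1/n). *)

Section Maps.
Variables k n : nat.
Implicit Types (f g : fT k n) (x y : 'I_n).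

Definition img f : {set 'I_n} := [set f p | p in 'I_k].

Lemma mem_img f p : f p \in img f.
Proof. exact: imset_f. Qed.

Lemma notin_img_neq f y p : y \notin img f -> f p != y.
Proof. by apply: contraNneq => <-; apply: mem_img. Qed.

Lemma card_img f : #|img f| <= k.
Proof. by rewrite (leq_trans (leq_imset_card _ _)) ?card_ord. Qed.

Definition shape f : {ffun 'I_k -> 'I_k.+1} :=
  [ffun p => inord (index (f p) (enum (img f)))].

Lemma img_shape_inj f g : img f = img g -> shape f = shape g -> f = g.
Proof.
move=> eq_img eq_shape; apply/ffunP => p.
have index_lt (h : fT k n) : index (h p) (enum (img h)) < k.+1.
  by rewrite ltnS ltnW // (leq_trans _ (card_img h)) // cardE index_mem mem_enum mem_img.
have := congr1 (fun s : {ffun _ -> _} => val (s p)) eq_shape; rewrite /= !ffunE /= !inordK //.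
rewrite eq_img => eq_index.
by apply: (index_inj (f p) _ _ eq_index); rewrite mem_enum ?mem_img // -eq_img mem_img.
Qed.

Definition padded_enum r x (S : {set 'I_n}) : {ffun 'I_r -> 'I_n} :=
  [ffun i : 'I_r => nth x (enum S) i].

Lemma padded_enumK r x (S : {set 'I_n}) : x \notin S -> #|S| <= r ->
  [set padded_enum r x S i | i in 'I_r] :\ x = S.
Proof.
move=> xS card_S; apply/setP => z; rewrite !inE.
apply/andP/idP => [[z_neq_x /imsetP[i _ z_def]] | zS].
  move: z_neq_x; rewrite z_def ffunE.
  case: (ltnP i #|S|) => [lt | ge]; last by rewrite nth_default -?cardE ?eqxx.
  by move=> _; rewrite cardE in lt; have := mem_nth x lt; rewrite mem_enum.
split; first by apply: contraNneq xS => <-.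
have lt : index z (enum S) < r by rewrite (leq_trans _ card_S) // cardE index_mem mem_enum.
by apply/imsetP; exists (Ordinal lt); rewrite ?ffunE ?nth_index ?mem_enum.
Qed.

Definition maps_hitting x y r :=
  [set f | [&& x \in img f, y \in img f & #|img f| <= r]].

Lemma card_maps_hitting x y r :
  x != y -> #|maps_hitting x y r| * n ^ 2 <= k.+1 ^ k * n ^ r.
Proof.
move=> neq_xy; have neq_yx : y != x by rewrite eq_sym.
have [r_lt2 | r_ge2] := ltnP r 2.
  suff -> : maps_hitting x y r = finset.set0 by rewrite cards0.
  apply/setP => f; rewrite !inE; apply/and3P => -[xf yf]; apply/negP; rewrite -ltnNge.
  have sub : [set x; y] \subset img f by apply/fintype.subsetP => z; rewrite !inE => /orP[]/eqP->.
  by move: (subset_leq_card sub); rewrite cards2 neq_xy; apply: leq_trans.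
(* f is determined by its shape and by the padded list of img f minus {x, y}. *)
suff le : #|maps_hitting x y r| <= k.+1 ^ k * n ^ (r - 2).
  by rewrite -[in n ^ r](subnK r_ge2) expnD mulnA leq_mul2r le orbT.
pose rest f := img f :\ x :\ y.
have card_rest f : f \in maps_hitting x y r -> #|rest f| <= r - 2.
  rewrite inE => /and3P[xf yf]; rewrite (cardsD1 x) xf (cardsD1 y (img f :\ x)) !inE neq_yx yf.
  by rewrite /rest /= addnA leq_subRL.
pose enc f := (shape f, padded_enum (r - 2) x (rest f)).
have img_enc f : f \in maps_hitting x y r ->
    img f = x |: (y |: ([set (enc f).2 i | i in 'I_(r - 2)] :\ x)).
  move=> fM; rewrite padded_enumK ?card_rest //; last by rewrite !inE eqxx andbF.
  move: fM; rewrite inE => /and3P[xf yf _].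
  by rewrite !finset.setD1K // !inE neq_yx.
have enc_inj : {in maps_hitting x y r &, injective enc}.
  move=> f g fM gM [eq_shape eq_rest]; apply: img_shape_inj eq_shape.
  by rewrite (img_enc f fM) (img_enc g gM) /enc eq_rest.
rewrite -(card_in_imset enc_inj) (leq_trans (max_card _)) //.
by rewrite card_prod !card_ffun !card_ord.
Qed.

Lemma succ_ord_neq x y : y = x.+1 :> nat -> x != y.
Proof. by move=> y_x; apply/eqP => eq_xy; move/eqP: y_x; rewrite eq_xy (ltn_eqF (ltnSn _)). Qed.

Lemma adjacent_ords a : 0 < a < n -> exists x y : 'I_n, y = x.+1 :> nat /\ val y = a.
Proof.
case/andP => a_gt0 a_lt; have pred_lt : a.-1 < n by rewrite (leq_ltn_trans (leq_pred a)).
by exists (Ordinal pred_lt), (Ordinal a_lt); rewrite /= prednK.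
Qed.

Definition relabel x y f : fT k n := [ffun p => if f p == x then y else f p].

Lemma relabelE x y f p : relabel x y f p = if f p == x then y else f p.
Proof. by rewrite ffunE. Qed.

Lemma relabel_tperm x y f p : y \notin img f -> relabel x y f p = tperm x y (f p).
Proof.
move=> yf; rewrite relabelE; case: tpermP => [-> | fp_y | fp_x _]; first by rewrite eqxx.
  by move: yf; rewrite -fp_y mem_img.
by rewrite (introF eqP fp_x).
Qed.

Lemma relabel_notin x y f : x != y -> x \notin img (relabel x y f).
Proof.
move=> neq_xy; apply/imsetP => -[p _]; rewrite relabelE.
case: eqVneq => [_ x_y | fp_neq_x x_fp]; first by rewrite x_y eqxx in neq_xy.
by rewrite x_fp eqxx in fp_neq_x.
Qed.

Lemma relabelK x y f : y \notin img f -> relabel y x (relabel x y f) = f.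
Proof.
move=> yf; apply/ffunP => p; rewrite !relabelE.
by case: (eqVneq (f p) x) => [-> | _]; rewrite ?eqxx // (negbTE (notin_img_neq p yf)).
Qed.

Lemma sum_relabel (V : zmodType) (P : pred (fT k n)) (w : fT k n -> V) m x y :
    x != y ->
    (forall f, P f -> y \notin img f -> P (relabel x y f)) ->
    (forall f, P f -> x \notin img f -> P (relabel y x f)) ->
    (forall f, y \notin img f -> w (relabel x y f) = w f) ->
  (\sum_(f | P f && (f m == x)) w f - \sum_(f | P f && (f m == y)) w f =
   \sum_(f | [&& P f, f m == x & y \in img f]) w f
     - \sum_(f | [&& P f, f m == y & x \in img f]) w f)%R.
Proof.
move=> neq_xy Pxy Pyx w_relabel; have neq_yx : y != x by rewrite eq_sym.
(* relabel x y is a weight-preserving bijection from the maps with f m = x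
   missing y onto the maps with f m = y missing x. *)
have missing_cancel : (\sum_(f | P f && (f m == x) && (y \notin img f)) w f =
                       \sum_(f | P f && (f m == y) && (x \notin img f)) w f)%R.
  rewrite [RHS](reindex_onto (relabel x y) (relabel y x)); last first.
    by move=> g /andP[_ xg]; apply: relabelK.
  apply: eq_big => f; last by case/andP => _ yf; rewrite w_relabel.
  apply/idP/idP => [/andP[/andP[Pf fm] yf] | /andP[/andP[/andP[Pg gm] xg] /eqP gK]].
    by rewrite Pxy // relabelE fm /= eqxx relabel_notin // relabelK ?eqxx.
  by rewrite -gK Pyx // relabelE gm /= eqxx relabel_notin.
rewrite (bigID (fun f => y \in img f)) [X in (_ - X)%R](bigID (fun f => x \in img f)) /=.
rewrite missing_cancel opprD addrACA subrr addr0.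
by congr (_ - _)%R; apply: eq_bigl => f; rewrite andbA.
Qed.

Definition adjacent x y := (x.+1 == y :> nat) || (y.+1 == x :> nat).

Definition relabel_closed (P : pred (fT k n)) :=
  forall x y f, adjacent x y -> y \notin img f -> P f -> P (relabel x y f).

Lemma nondecr_relabel_closed : relabel_closed (@nondecr k n).
Proof.
move=> x y f adj yf /forallP mono; apply/forallP => i; apply/forallP => j.
apply/implyP => le_ij; have := implyP (forallP (mono i) j) le_ij.
have := notin_img_neq i yf; have := notin_img_neq j yf.
move: adj; rewrite /adjacent !relabelE -!val_eqE /=.
by do ![case: eqP => ? /=]; lia.
Qed.

Lemma strincr_relabel_closed : relabel_closed (@strincr k n).
Proof.
move=> x y f adj yf /forallP mono; apply/forallP => i; apply/forallP => j.
apply/implyP => lt_ij; have := implyP (forallP (mono i) j) lt_ij.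
have := notin_img_neq i yf; have := notin_img_neq j yf.
move: adj; rewrite /adjacent !relabelE -!val_eqE /=.
by do ![case: eqP => ? /=]; lia.
Qed.

Lemma strincr_inj f : strincr f -> injective f.
Proof.
move=> /forallP incr p q fpq; apply: val_inj.
case: (ltngtP p q) => // lt;
  [have := implyP (forallP (incr p) q) lt | have := implyP (forallP (incr q) p) lt].
all: by rewrite fpq ltnn.
Qed.

Lemma strincr_nondecr f : strincr f -> nondecr f.
Proof.
move=> /forallP incr; apply/forallP => i; apply/forallP => j; apply/implyP.
by rewrite leq_eqVlt => /orP[/eqP/val_inj-> // | lt]; exact: ltnW (implyP (forallP (incr i) j) lt).
Qed.

Lemma nondecr_inj_strincr f : nondecr f -> injective f -> strincr f.
Proof.
move=> /forallP mono inj_f; apply/forallP => i; apply/forallP => j; apply/implyP => lt_ij.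
rewrite ltn_neqAle (implyP (forallP (mono i) j) (ltnW lt_ij)) andbT.
by apply/eqP => /val_inj/inj_f eq_ij; rewrite eq_ij ltnn in lt_ij.
Qed.

Lemma card_img_nondecr f : nondecr f -> ~~ strincr f -> #|img f| <= k.-1.
Proof.
move=> mono; apply: contraNT; rewrite -ltnNge => lt; apply: nondecr_inj_strincr mono _.
have : #|img f| == #|'I_k| by rewrite card_ord eqn_leq card_img; lia.
by move/imset_injP => inj_f p q; apply: inj_f.
Qed.

End Maps.

Local Open Scope ring_scope.

Section Weights.
Variables (R : realFieldType) (k n : nat).
Implicit Types (f : fT k n) (x y : 'I_n).

Definition weight f : R := ((\prod_(i < n) (fib f i)`!)%:R)^-1.

Lemma weight_ge0 f : 0 <= weight f.
Proof. by rewrite invr_ge0 ler0n. Qed.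

Lemma weight_le1 f : weight f <= 1.
Proof. by rewrite invf_le1 ?ler1n ?ltr0n ?prodn_gt0 // => i; rewrite fact_gt0. Qed.

Lemma weight_relabel x y f : y \notin img f -> weight (relabel x y f) = weight f.
Proof.
move=> yf; rewrite /weight [in RHS](reindex_inj (@perm_inj _ (tperm x y))).
congr (_%:R^-1); apply: eq_bigr => i _; congr _`!; apply: eq_card => p.
by rewrite !inE relabel_tperm // (canF_eq (tpermK x y)).
Qed.

Lemma weight_strincr f : strincr f -> weight f = 1.
Proof.
move=> /strincr_inj inj_f; rewrite /weight big1 ?mulr1n ?invr1 // => i _.
have : (fib f i <= 1)%N.
  by apply/card_le1_eqP => p q; rewrite !inE => /eqP <- /eqP /inj_f ->.
by case: (fib f i) => [|[|]].
Qed.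

Definition bvec (a : nat) (i : 'I_n) : R := (i.+1 == a)%:R - (i.+1 == a.+1)%:R.

Lemma BmxE a b i j : Bmx R n a b i j = bvec a i * bvec b j.
Proof.
rewrite mxE /bvec.
case: (i.+1 =P a) => ?; case: (i.+1 =P a.+1) => ?; case: (j.+1 =P b) => ?;
  case: (j.+1 =P b.+1) => ? /=; first [ring | lia].
Qed.

Definition bsum (P : pred (fT k n)) (a : nat) (m : 'I_k) : R :=
  \sum_(f | P f) weight f * bvec a (f m).

Lemma bsum_hitting P m x y : y = x.+1 :> nat -> relabel_closed P ->
  bsum P y m = \sum_(f | [&& P f, f m == x & y \in img f]) weight f
             - \sum_(f | [&& P f, f m == y & x \in img f]) weight f.
Proof.
move=> y_x P_closed.
have neq_xy := succ_ord_neq y_x.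
have adj_xy : adjacent x y by rewrite /adjacent y_x eqxx.
have adj_yx : adjacent y x by rewrite /adjacent orbC.
transitivity (\sum_(f | P f && (f m == x)) weight f - \sum_(f | P f && (f m == y)) weight f).
  rewrite !big_mkcondr -sumrB; apply: eq_bigr => f _.
  by rewrite /bvec y_x !eqSS -y_x mulrBr !mulr_natr !mulrb.
apply: sum_relabel => // [f Pf yf | f Pf xf | f yf]; last exact: weight_relabel.
  exact: P_closed.
exact: P_closed.
Qed.

Lemma sum_weight_bounds (Q : pred (fT k n)) (A : {set fT k n}) :
  (forall f, Q f -> f \in A) -> 0 <= \sum_(f | Q f) weight f <= #|A|%:R.
Proof.
move=> QA; rewrite sumr_ge0 => [|f _]; last exact: weight_ge0.
rewrite (le_trans (ler_sum _ (fun f _ => weight_le1 f))) //.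
have -> : \sum_(f | Q f) (1 : R) = #|Q|%:R by rewrite -sum1_card natr_sum.
by rewrite ler_nat subset_leq_card //; apply/fintype.subsetP => f /QA.
Qed.

Lemma norm_bsum_le P m x y : y = x.+1 :> nat -> relabel_closed P ->
  `|bsum P y m| <= #|maps_hitting k x y k|%:R.
Proof.
move=> y_x P_closed; rewrite (@bsum_hitting P m x y y_x P_closed).
have hit_x f : [&& P f, f m == x & y \in img f] -> f \in maps_hitting k x y k.
  by case/and3P => _ /eqP <- yf; rewrite inE mem_img yf card_img.
have hit_y f : [&& P f, f m == y & x \in img f] -> f \in maps_hitting k x y k.
  by case/and3P => _ /eqP <- xf; rewrite inE mem_img xf card_img.
have /andP[X_ge0 X_le] := sum_weight_bounds hit_x.
have /andP[Y_ge0 Y_le] := sum_weight_bounds hit_y.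
by rewrite ler_norml; apply/andP; split; lra.
Qed.

Lemma norm_bsum_nondecr_sub_strincr m x y : y = x.+1 :> nat ->
  `|bsum (@nondecr k n) y m - bsum (@strincr k n) y m|
    <= #|maps_hitting k x y k.-1|%:R.
Proof.
move=> y_x; rewrite (@bsum_hitting _ m x y y_x (@nondecr_relabel_closed k n)).
rewrite (@bsum_hitting _ m x y y_x (@strincr_relabel_closed k n)).
have strict_part z q :
    \sum_(f | [&& nondecr f, f m == z & q \in img f]) weight f
      - \sum_(f | [&& strincr f, f m == z & q \in img f]) weight f
    = \sum_(f | [&& nondecr f, f m == z & q \in img f] && ~~ strincr f) weight f.
  rewrite (bigID (@strincr k n)) /= addrAC.
  rewrite [X in X - _](eq_bigl (fun f => [&& strincr f, f m == z & q \in img f])) ?subrr ?add0r // => f.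
  by case: (boolP (strincr f)) => [incr | _]; rewrite ?andbT ?andbF // (strincr_nondecr incr).
have hit_x f : [&& nondecr f, f m == x & y \in img f] && ~~ strincr f ->
    f \in maps_hitting k x y k.-1.
  by case/andP => /and3P[mono /eqP <- yf] /(card_img_nondecr mono); rewrite inE mem_img yf.
have hit_y f : [&& nondecr f, f m == y & x \in img f] && ~~ strincr f ->
    f \in maps_hitting k x y k.-1.
  by case/andP => /and3P[mono /eqP <- xf] /(card_img_nondecr mono); rewrite inE mem_img xf.
have /andP[X_ge0 X_le] := sum_weight_bounds hit_x.
have /andP[Y_ge0 Y_le] := sum_weight_bounds hit_y.
have := strict_part x y; have := strict_part y x.
by rewrite ler_norml => ? ?; apply/andP; split; lra.
Qed.

Lemma norm_bsum_le_pow P m a : relabel_closed P -> (0 < a < n)%N ->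
  n%:R ^+ 2 * `|bsum P a m| <= (k.+1 ^ k)%:R * n%:R ^+ k.
Proof.
move=> P_closed /adjacent_ords[x [y [y_x <-]]].
rewrite (le_trans (ler_wpM2l _ (@norm_bsum_le P m x y y_x P_closed))) ?exprn_ge0 ?ler0n //.
rewrite -!natrX -!natrM ler_nat [X in (X <= _)%N]mulnC card_maps_hitting //.
exact: succ_ord_neq.
Qed.

Lemma norm_bsum_nondecr_sub_strincr_le_pow m a : (0 < a < n)%N ->
  n%:R ^+ 3 * `|bsum (@nondecr k n) a m - bsum (@strincr k n) a m|
    <= (k.+1 ^ k)%:R * n%:R ^+ k.
Proof.
move=> /adjacent_ords[x [y [y_x <-]]].
rewrite (le_trans (ler_wpM2l _ (@norm_bsum_nondecr_sub_strincr m x y y_x))) ?exprn_ge0 ?ler0n //.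
rewrite -!natrX -!natrM ler_nat.
have -> : (n ^ k = n * n ^ k.-1)%N by rewrite -expnS prednK // (leq_ltn_trans _ (ltn_ord m)).
have -> : (n ^ 3 * #|maps_hitting k x y k.-1| = n * (#|maps_hitting k x y k.-1| * n ^ 2))%N.
  by ring.
by rewrite [X in (_ <= X)%N]mulnCA leq_mul2l card_maps_hitting ?orbT // succ_ord_neq.
Qed.

Lemma sum_weighted_Bmx (P : pred (fT k n)) (pi : 'S_k) a b :
  \sum_(f | P f) \sum_(g | P g)
     weight f * weight g * \sum_(m < k) Bmx R n a b (f m) (g (pi m))
  = \sum_(m < k) bsum P a m * bsum P b (pi m).
Proof.
under eq_bigr => f _ do under eq_bigr => g _ do rewrite mulr_sumr.
under eq_bigr => f _ do rewrite exchange_big.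
rewrite exchange_big; apply: eq_bigr => m _; rewrite /bsum big_distrlr.
by apply: eq_bigr => f _; apply: eq_bigr => g _; rewrite BmxE mulrACA.
Qed.

End Weights.

Lemma is_derive_big_sum (R : numFieldType) (V W : normedModType R) (I : Type)
    (r : seq I) (P : pred I) (F : I -> V -> W) (dF : I -> W) (x v : V) :
  (forall i, is_derive x v (F i) (dF i)) ->
  is_derive x v (fun t => \sum_(i <- r | P i) F i t) (\sum_(i <- r | P i) dF i).
Proof.
move=> F_dF; rewrite -fct_sumE.
by elim/big_ind2 : _ => // *; [exact: is_derive_cst | exact: is_deriveD].
Qed.

Lemma is_derive_prod_affine (R : realType) k (c : R) (v : 'I_k -> R) :
  is_derive (0 : R) 1 (fun t => \prod_(m < k) (c + t * v m)) ((\sum_(m < k) v m) * c ^+ k.-1).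
Proof.
elim: k v => [|k IH] v.
  under eq_fun do rewrite big_ord0.
  by rewrite big_ord0 mul0r; exact: is_derive_cst.
have line (a : R) : is_derive (0 : R) 1 (fun t : R => c + t * a) a.
  apply: is_derive_eq (is_deriveD (is_derive_cst c (0 : R) 1)
                        (is_deriveM (is_derive_id (0 : R) 1) (is_derive_cst a (0 : R) 1))) _.
  by rewrite scaler0 !add0r [LHS]mulr1.
under eq_fun do rewrite big_ord_recr.
apply: is_derive_eq (is_deriveM (IH (fun m => v (widen_ord (leqnSn k) m))) (line _)) _.
rewrite /= big_ord_recr (eq_bigr (fun=> c)) => [|m _]; last by rewrite mul0r addr0.
rewrite prodr_const card_ord mul0r addr0.
case: k {IH} v => [|k] v; rewrite ?big_ord0 ?exprS /GRing.scale /=; ring.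
Qed.

Lemma Jx_ecoord (R : fieldType) n a b (t : R) : (0 < a < n)%N -> (0 < b < n)%N ->
  Jx n (ecoord a b t) = Jmx R n + t *: Bmx R n a b.
Proof.
move=> a_rng b_rng; rewrite /Jx /ecoord; congr (_ + _).
have row_sum i : \sum_(1 <= j < n) (if (i == a) && (j == b) then t else 0) *: Bmx R n i j
                 = if i == a then t *: Bmx R n i b else 0.
  case: eqP => _ /=; last by rewrite big1 // => j _; rewrite scale0r.
  rewrite (eq_bigr (fun j => if j == b then t *: Bmx R n i j else 0)) => [|j _].
    by rewrite -big_mkcond big_nat1_eq b_rng.
  by case: eqP; rewrite ?scale0r.
by under eq_bigr do rewrite row_sum; rewrite -big_mkcond big_nat1_eq a_rng.
Qed.

Lemma dhE (R : realType) k (pi : 'S_k) n a b : (0 < a < n)%N -> (0 < b < n)%N ->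
  dh R pi n a b = k`!%:R / n%:R ^+ k * n%:R^-1 ^+ k.-1 *
    \sum_(m < k) bsum R (@nondecr k n) a m * bsum R (@nondecr k n) b (pi m).
Proof.
move=> a_rng b_rng.
pose B f g := \sum_(m < k) Bmx R n a b (f m) (g (pi m)).
have h_line : (fun t => h pi n (ecoord a b t)) = fun t => k`!%:R / n%:R ^+ k *
    \sum_(f : fT k n | nondecr f) \sum_(g : fT k n | nondecr g) weight R f * weight R g *
      \prod_(m < k) (n%:R^-1 + t * Bmx R n a b (f m) (g (pi m))).
  apply/funext => t; rewrite /h; congr (_ * _); apply: eq_bigr => f _; apply: eq_bigr => g _.
  rewrite big_split natrM invfM; congr (_ * _); apply: eq_bigr => m _.
  by rewrite Jx_ecoord // !mxE.
have is_derive_h_line : is_derive (0 : R) 1 (fun t => h pi n (ecoord a b t)) (k`!%:R / n%:R ^+ k *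
    \sum_(f : fT k n | nondecr f) \sum_(g : fT k n | nondecr g)
      weight R f * weight R g * (B f g * n%:R^-1 ^+ k.-1)).
  rewrite h_line; apply: is_deriveZ; do 2!apply: is_derive_big_sum => ?.
  apply: is_deriveZ; exact: is_derive_prod_affine.
rewrite /dh derive1E derive_val -sum_weighted_Bmx -[RHS]mulrA; congr (_ * _).
rewrite mulr_sumr; apply: eq_bigr => f _; rewrite mulr_sumr; apply: eq_bigr => g _.
by rewrite /B; ring.
Qed.

Lemma lhs_seqE (R : realType) k (pi : 'S_k) (alpha beta : R) n :
    (0 < fl alpha n < n)%N -> (0 < fl beta n < n)%N ->
  lhs_seq pi alpha beta n = k`!%:R * n%:R ^+ 4 / n%:R ^+ (2 * k) *
    \sum_(m < k) bsum R (@nondecr k n) (fl alpha n) m * bsum R (@nondecr k n) (fl beta n) (pi m).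
Proof.
move=> a_rng b_rng; rewrite /lhs_seq dhE // !mulrA.
case: k pi => [|k] pi; first by rewrite !big_ord0 !mulr0.
congr (_ * _).
have n_gt0 : (0 < n)%N by case/andP: a_rng => _ /(leq_ltn_trans (leq0n _)).
have u_neq0 : n%:R != 0 :> R by rewrite pnatr_eq0 -lt0n.
rewrite exprVn mul2n -addnn exprD !exprSr.
move: (expf_neq0 k u_neq0); set w := _ ^+ k => w_neq0.
by field; rewrite w_neq0 u_neq0.
Qed.

Lemma rhs_seqE (R : realType) k (pi : 'S_k) (alpha beta : R) n : (0 < n)%N ->
  rhs_seq pi alpha beta n = k`!%:R * n%:R ^+ 4 / n%:R ^+ (2 * k) *
    \sum_(m < k) bsum R (@strincr k n) (fl alpha n) m * bsum R (@strincr k n) (fl beta n) (pi m).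
Proof.
move=> n_gt0; have u_neq0 : n%:R != 0 :> R by rewrite pnatr_eq0 -lt0n.
rewrite /rhs_seq -sum_weighted_Bmx; congr (_ * _).
  by rewrite expfzDr // -exprnN -PoszM invf_div mulrA.
apply: eq_bigr => f incr_f; apply: eq_bigr => g incr_g.
by rewrite !weight_strincr // !mul1r.
Qed.

Lemma norm_mul_sub_le (R : realFieldType) (u X d d' e e' : R) : 0 < u ->
    u ^+ 3 * `|d - d'| <= X -> u ^+ 2 * `|e| <= X ->
    u ^+ 2 * `|d'| <= X -> u ^+ 3 * `|e - e'| <= X ->
  u ^+ 5 * `|d * e - d' * e'| <= 2 * X ^+ 2.
Proof.
move=> u_gt0 dd'_le e_le d'_le ee'_le; have u_ge0 := ltW u_gt0.
have -> : d * e - d' * e' = (d - d') * e + d' * (e - e') by ring.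
apply: le_trans (ler_wpM2l (exprn_ge0 _ u_ge0) (ler_normD _ _)) _.
rewrite !normrM (_ : 2 * X ^+ 2 = X * X + X * X); last by ring.
have -> : u ^+ 5 * (`|d - d'| * `|e| + `|d'| * `|e - e'|) =
          u ^+ 3 * `|d - d'| * (u ^+ 2 * `|e|) + u ^+ 2 * `|d'| * (u ^+ 3 * `|e - e'|).
  by ring.
by apply: lerD; apply: ler_pM; rewrite ?mulr_ge0 ?exprn_ge0.
Qed.

Lemma norm_lhs_sub_rhs_le (R : realType) k (pi : 'S_k) (alpha beta : R) n :
    (0 < fl alpha n < n)%N -> (0 < fl beta n < n)%N ->
  `|lhs_seq pi alpha beta n - rhs_seq pi alpha beta n|
    <= (2 * k * k`! * (k.+1 ^ k) ^ 2)%:R / n%:R.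
Proof.
move=> a_rng b_rng.
have n_gt0 : (0 < n)%N by case/andP: a_rng => _ /(leq_ltn_trans (leq0n _)).
set u : R := n%:R; have u_gt0 : 0 < u by rewrite ltr0n.
set X := (k.+1 ^ k)%:R * u ^+ k.
have term m : `|bsum R (@nondecr k n) (fl alpha n) m * bsum R (@nondecr k n) (fl beta n) (pi m)
               - bsum R (@strincr k n) (fl alpha n) m * bsum R (@strincr k n) (fl beta n) (pi m)|
              <= 2 * X ^+ 2 / u ^+ 5.
  rewrite ler_pdivlMr ?exprn_gt0 // mulrC; apply: norm_mul_sub_le u_gt0 _ _ _ _.
  - exact: norm_bsum_nondecr_sub_strincr_le_pow.
  - exact: norm_bsum_le_pow (@nondecr_relabel_closed k n) b_rng.
  - exact: norm_bsum_le_pow (@strincr_relabel_closed k n) a_rng.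
  - exact: norm_bsum_nondecr_sub_strincr_le_pow.
rewrite lhs_seqE // rhs_seqE // -mulrBr -sumrB normrM ger0_norm; last first.
  by rewrite !mulr_ge0 ?invr_ge0 ?exprn_ge0 ?ler0n ?ltW.
apply: le_trans (ler_wpM2l _ (le_trans (ler_norm_sum _ _ _) (ler_sum _ (fun m _ => term m)))) _.
  by rewrite !mulr_ge0 ?invr_ge0 ?exprn_ge0 ?ler0n ?ltW.
rewrite sumr_const card_ord /X -/u -mulr_natr !natrM natrX mul2n -addnn exprD.
have u_neq0 : u != 0 by rewrite gt_eqF.
move: (expf_neq0 k u_neq0); set w := u ^+ k => w_neq0.
by rewrite le_eqVlt; apply/predU1l; field; rewrite w_neq0 u_neq0.
Qed.

Local Open Scope classical_set_scope.

Lemma fl_range (R : realType) (alpha : R) : 0 < alpha < 1 ->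
  \forall n \near \oo, (0 < fl alpha n < n)%N.
Proof.
case/andP => a_gt0 a_lt1; near=> n.
have n_gt : alpha^-1 < n%:R by near: n; apply: nbhs_infty_gtr.
have n_pos : 0 < n%:R :> R by apply: lt_trans n_gt; rewrite invr_gt0.
have lt_n : alpha * n%:R < n%:R by rewrite gtr_pMl.
have ge_1 : 1 <= alpha * n%:R.
  by rewrite -[X in X <= _](mulfV (lt0r_neq0 a_gt0)) ler_pM2l // ltW.
by rewrite /fl truncn_gt0 ge_1 truncn_lt_nat ?mulr_ge0 ?ler0n ?ltW.
Unshelve. all: by end_near. Qed.

Lemma cvg0_norm_le_div (R : realType) (u : nat -> R) (C : R) :
  (\forall n \near \oo, `|u n| <= C / n%:R) -> u n @[n --> \oo] --> 0.
Proof.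
move=> u_le; apply/cvgrPdist_le => e e_gt0; near=> n.
have n_gt : C / e < n%:R by near: n; apply: nbhs_infty_gtr.
have n_pos : 0 < n%:R :> R by near: n; apply: nbhs_infty_gtr.
have u_n : `|u n| <= C / n%:R by near: n.
rewrite sub0r normrN (le_trans u_n) // ler_pdivrMr // mulrC -ler_pdivrMr //.
exact: ltW.
Unshelve. all: by end_near. Qed.

Lemma lhs_sub_rhs_cvg0 (R : realType) k (pi : 'S_k) (alpha beta : R) :
    0 < alpha < 1 -> 0 < beta < 1 ->
  lhs_seq pi alpha beta n - rhs_seq pi alpha beta n @[n --> \oo] --> 0.
Proof.
move=> alpha_rng beta_rng; apply: cvg0_norm_le_div; near=> n.
apply: norm_lhs_sub_rhs_le; near: n; [exact: fl_range | exact: fl_range].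
Unshelve. all: by end_near. Qed.

Theorem lemma4 (R : realType) (k : nat) (pi : 'S_k) (alpha beta : R) :
  0 < alpha < 1 -> 0 < beta < 1 ->
  ((exists l : R, lhs_seq pi alpha beta n @[n --> \oo] --> l) \/
   (exists l : R, rhs_seq pi alpha beta n @[n --> \oo] --> l)) ->
  exists l : R, lhs_seq pi alpha beta n @[n --> \oo] --> l /\
                rhs_seq pi alpha beta n @[n --> \oo] --> l.
Proof.
move=> alpha_rng beta_rng.
have lhs_rhs := lhs_sub_rhs_cvg0 pi alpha_rng beta_rng.
case=> -[l conv]; exists l; split => //; apply: cvg_sub0 conv.
  by rewrite -opprB -oppr0; apply: cvgN.
exact: lhs_rhs.
Qed.
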